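(* Let $p+q=4k+2$ with $k\ge1$. (i) If $p,q$ are odd, $p\ge1$ and $q\ge5$, then $\mathbb{O}_{p,q}\simeq\mathbb{O}_{p+4,q-4}$. (ii) If $p,q$ are even, $p\ge4$ and $q\ge2$, then $\mathbb{O}_{p,q}\simeq\mathbb{O}_{p-2,q+2}$. (The isomorphisms preserve the $\mathbb{Z}_2^n$-graded structure.)
   Context: $\mathbb{Z}_2=\{0,1\}$. For $p+q=n\ge3$, $\mathbb{O}_{p,q}$ is the real algebra with basis $\{u_x: x\in\mathbb{Z}_2^n\}$ and product $u_x\cdot u_y=(-1)^{f(x,y)}u_{x+y}$, where $f(x,y)=\sum_{1\le i<j<k\le n}(x_ix_jy_k+x_iy_jx_k+y_ix_jx_k)+\sum_{1\le i\le j\le n}x_iy_j+\sum_{1\le i\le p}x_iy_i$. Homogeneous elements are scalar multiples of some $u_x$. *)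

From HB Require Import structures.
From mathcomp Require Import all_boot all_order all_algebra.
From mathcomp Require Import Rstruct.
From Stdlib Require Rdefinitions.
Notation R := Rdefinitions.R.
Set Implicit Arguments. Unset Strict Implicit. Unset Printing Implicit Defensive.
Import Order.TTheory GRing.Theory Num.Theory.

(* Z_2^n : boolean vectors indexed by 'I_n (index i : 'I_n stands for i+1). *)
Definition bv (n : nat) := {ffun 'I_n -> bool}.

Definition bvadd n (x y : bv n) : bv n := [ffun i => x i (+) y i].

(* the twisting function f(x,y) in Z_2 (as a parity bit), for signature p
   (q = n - p); indices are 0-based, so 1<=i<=p becomes i < p. *)
Definition ftw (n p : nat) (x y : bv n) : bool :=
  odd (\sum_(i < n) \sum_(j < n) \sum_(k < n)
          ((i < j < k) * (x i * x j * y k + x i * y j * x k + y i * x j * x k))%N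
       + \sum_(i < n) \sum_(j < n) ((i <= j) * (x i * y j))%N
       + \sum_(i < n) ((i < p) * (x i * y i))%N)%N.

Local Open Scope ring_scope.

(* The algebra O_{p,q} (n = p + q): elements are real coefficient functions
   on the basis {u_x : x in Z_2^n}. *)
Definition Oalg (n : nat) := {ffun bv n -> R}.

Definition ubasis n (x : bv n) : Oalg n := [ffun z => if z == x then 1 else 0].

Definition oscale n (c : R) (a : Oalg n) : Oalg n := [ffun z => c * a z].

(* bilinear product determined by u_x . u_y = (-1)^f(x,y) u_{x+y} *)
Definition omul (n p : nat) (a b : Oalg n) : Oalg n :=
  [ffun z => \sum_(x : bv n) a x * b (bvadd x z) * (-1) ^+ ftw p x (bvadd x z)].

Definition graded_iso (n p p' : nat) : Prop :=
  exists (phi : Oalg n -> Oalg n) (psi : bv n -> bv n),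
    (forall a b, phi (a + b) = phi a + phi b) /\
    (forall (c : R) (a : Oalg n), phi (oscale c a) = oscale c (phi a)) /\
    bijective phi /\
    (forall a b, phi (omul p a b) = omul p' (phi a) (phi b)) /\
    bijective psi /\
    (forall x y, psi (bvadd x y) = bvadd (psi x) (psi y)) /\
    (forall x, exists c : R, phi (ubasis x) = oscale c (ubasis (psi x))).

(* Modulo 2 the cocycle splits into weights and dot products:
   f(x,y) = |y| C(|x|,2) + (|x|+1) <x,y> + B(x,y) + <x,y>_P, where
   B(x,y) = sum_(i <= j) x_i y_j and <x,y>_P is the dot product over P = {1,...,p}.
   Let L be a set of indices whose complement, with indicator u, has
   |u| = 2 mod 4 and |P \ L| odd.  The involutive automorphism of Z_2^n
   adding u to every x with |x /\ L| odd carries the cocycle of P to that of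
   the symmetric difference P + L up to a coboundary, and rescaling the basis by
   the signs of that coboundary gives a graded isomorphism.  Part (i) is one
   such flip with L = {p+1,...,p+4}; part (ii), with p = r + 4, is three flips
   with L = r + {1,2,3,5}, r + {1,3,4,6}, r + {2,3,5,6}, whose symmetric
   difference is r + {3,4}. *)

From Stdlib Require Import Btauto.
From mathcomp Require Import all_boot all_algebra zify ring Rstruct.
Set Implicit Arguments. Unset Strict Implicit. Unset Printing Implicit Defensive.

Lemma addb_xorb a b : a (+) b = xorb a b. Proof. by case: a; case: b. Qed.

Lemma odd_sum (I : Type) (r : seq I) (P : pred I) (F : I -> nat) :
  odd (\sum_(i <- r | P i) F i) = \big[addb/false]_(i <- r | P i) odd (F i).
Proof. by apply: (big_morph odd oddD). Qed.

Lemma bin2D a b : 'C(a + b, 2) = 'C(a, 2) + 'C(b, 2) + a * b.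
Proof.
elim: b => [|b IH]; first by rewrite addn0 muln0 bin0n addn0 addn0.
rewrite addnS binS IH bin1 binS bin1 mulnS; lia.
Qed.

Section Twist.
Variable n : nat.
Implicit Types (x y z u : bv n) (A P U : pred nat).

Definition wt A x : nat := \sum_(i < n | A i) (x i : nat).
Definition parity A x := odd (wt A x).
Definition parity2 A x := odd 'C(wt A x, 2).
Definition dotb A x y := \big[addb/false]_(i < n | A i) (x i && y i).
Definition uppb x y := \big[addb/false]_(i < n) \big[addb/false]_(j < n) ((i <= j) && x i && y j).
Definition twist P x y :=
  (parity predT y && parity2 predT x) (+) (~~ parity predT x && dotb predT x y) (+) uppb x y (+) dotb P x y.

Lemma parityE A x : parity A x = \big[addb/false]_(i < n | A i) x i.
Proof. by rewrite /parity /wt odd_sum; apply: eq_bigr => i _; case: (x i). Qed.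

Lemma parityD A x y : parity A (bvadd x y) = parity A x (+) parity A y.
Proof. by rewrite !parityE -big_split; apply: eq_bigr => i _; rewrite ffunE. Qed.

Lemma dotbDl A x y z : dotb A (bvadd x y) z = dotb A x z (+) dotb A y z.
Proof. by rewrite /dotb -big_split; apply: eq_bigr => i _; rewrite ffunE andb_addl. Qed.

Lemma dotbC A x y : dotb A x y = dotb A y x.
Proof. by apply: eq_bigr => i _; rewrite andbC. Qed.

Lemma dotbDr A x y z : dotb A z (bvadd x y) = dotb A z x (+) dotb A z y.
Proof. by rewrite !(dotbC _ z) dotbDl. Qed.

Lemma dotbxx A x : dotb A x x = parity A x.
Proof. by rewrite parityE; apply: eq_bigr => i _; rewrite andbb. Qed.

Lemma dotb_predD P U x y : dotb (fun i => P i (+) U i) x y = dotb P x y (+) dotb U x y.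
Proof.
rewrite /dotb big_mkcond [X in X (+) _]big_mkcond [X in _ (+) X]big_mkcond -big_split /=.
by apply: eq_bigr => i _; case: (P i); case: (U i); case: (x i && y i).
Qed.

Lemma uppbDl x y z : uppb (bvadd x y) z = uppb x z (+) uppb y z.
Proof.
rewrite /uppb -big_split; apply: eq_bigr => i _; rewrite -big_split.
by apply: eq_bigr => j _; rewrite ffunE /=; case: (i <= j); case: (x i); case: (y i); case: (z j).
Qed.

Lemma uppbDr x y z : uppb z (bvadd x y) = uppb z x (+) uppb z y.
Proof.
rewrite /uppb -big_split; apply: eq_bigr => i _; rewrite -big_split.
by apply: eq_bigr => j _; rewrite ffunE /=; case: (i <= j); case: (z i); case: (x j); case: (y j).
Qed.

Definition dotn A x y : nat := \sum_(i < n | A i) ((x i && y i) : nat).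

Lemma odd_dotn A x y : odd (dotn A x y) = dotb A x y.
Proof. by rewrite /dotn odd_sum; apply: eq_bigr => i _; case: (x i && y i). Qed.

Lemma wtD A x y : wt A (bvadd x y) + 2 * dotn A x y = wt A x + wt A y.
Proof.
rewrite /wt /dotn big_distrr -!big_split /=; apply: eq_bigr => i _.
by rewrite ffunE; case: (x i); case: (y i).
Qed.

Lemma parity2D A x y :
  parity2 A (bvadd x y) = parity2 A x (+) parity2 A y (+) (parity A x && parity A y) (+) dotb A x y.
Proof.
have E := wtD A x y.
rewrite /parity2 /parity -odd_dotn.
have := congr1 (fun t => odd (binomial t 2)) E => /=.
rewrite bin2D [X in _ = odd X -> _]bin2D mul2n -addnn bin2D !oddD !oddM addbb /=.
rewrite addnn odd_double andbF addbF andbb => <-.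
by rewrite -addbA addbb addbF.
Qed.

Lemma wt_predT z : wt predT z = \sum_(i < n) (z i : nat).
Proof. by []. Qed.

Lemma sum_lt_pairs z :
  \sum_(a < n) \sum_(b < n) ((a < b) * (z a * z b)) = 'C(wt predT z, 2).
Proof.
set S := \sum_(a < n) _.
have sq_wt : wt predT z * wt predT z = \sum_(a < n) \sum_(b < n) (z a * z b).
  by rewrite wt_predT big_distrl; apply: eq_bigr => a _; rewrite big_distrr.
have sq_split : \sum_(a < n) \sum_(b < n) (z a * z b) =
   S + \sum_(a < n) \sum_(b < n) ((b < a) * (z a * z b)) + wt predT z.
  rewrite wt_predT /S -!big_split /=; apply: eq_bigr => a _.
  rewrite -!big_split /= (bigD1 a) //= [X in _ = X + _](bigD1 a) //= ltnn /=.
  rewrite !mul0n !add0n [in RHS]addnC; congr (_ + _); first by case: (z a).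
  apply: eq_bigr => b Hb.
  case: (ltngtP a b) => [_|_|e]; rewrite ?mul1n ?mul0n ?addn0 ?add0n //.
  by move: Hb; rewrite (val_inj e) eqxx.
have gt_pairs : \sum_(a < n) \sum_(b < n) ((b < a) * (z a * z b)) = S.
  rewrite /S exchange_big; apply: eq_bigr => a _; apply: eq_bigr => b _.
  by congr (_ * _); rewrite mulnC.
rewrite gt_pairs in sq_split.
rewrite bin2; move: sq_wt; rewrite sq_split => H.
have E : wt predT z * (wt predT z).-1 = S + S.
  by move: H; case: (wt predT z) => [|w] /= H; nia.
by rewrite E addnn doubleK.
Qed.

Lemma uppbE x y : uppb x y = odd (\sum_(i < n) \sum_(j < n) ((i <= j) * (x i * y j))).
Proof.
rewrite odd_sum; apply: eq_bigr => i _; rewrite odd_sum; apply: eq_bigr => j _.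
by case: (i <= j); case: (x i); case: (y j).
Qed.

Lemma uppbxx z : uppb z z = parity2 predT z (+) parity predT z.
Proof.
rewrite uppbE /parity2 /parity -sum_lt_pairs -oddD; congr odd.
rewrite wt_predT -big_split /=; apply: eq_bigr => a _.
rewrite (bigD1 a) // [X in _ = X + _](bigD1 a) //= leqnn ltnn /= mul0n add0n mul1n.
rewrite addnC; congr (_ + _); last by case: (z a).
apply: eq_bigr => b Hb; rewrite leq_eqVlt.
suff -> : (a == b :> nat) = false by [].
by apply/eqP => e; move: Hb; rewrite (val_inj e) eqxx.
Qed.

Lemma uppb_sym x y : uppb x y (+) uppb y x = (parity predT x && parity predT y) (+) dotb predT x y.
Proof.
rewrite /uppb [X in _ (+) X]exchange_big -big_split /= !parityE /dotb /predT /= big_distrl -big_split /=.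
apply: eq_bigr => i _; rewrite -big_split /= big_distrr /= (bigD1 i) // [X in _ = X (+) _](bigD1 i) //=.
rewrite leqnn /=.
have -> : \big[addb/false]_(j < n | j != i)
            ((i <= j) && x i && y j (+) (j <= i) && y j && x i)
          = \big[addb/false]_(j < n | j != i) (x i && y j).
  apply: eq_bigr => j Hj.
  have Hne : (i <= j) (+) (j <= i).
    case: (ltngtP i j) => [h|h|e] //.
    by move: Hj; rewrite (val_inj e) eqxx.
  by move: Hne; case: (i <= j); case: (j <= i); case: (x i); case: (y j).
by rewrite (andbC (y i)) addbb addFb [RHS]addbC addbA addbb addFb.
Qed.

Definition indicator (V : pred nat) : bv n := [ffun i : 'I_n => V i].

Lemma dotb_indicatorC x U : dotb predT x (indicator (predC U)) = parity predT x (+) parity U x.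
Proof.
rewrite /dotb !parityE [X in _ = _ (+) X]big_mkcond -big_split /=; apply: eq_bigr => i _.
by rewrite ffunE /=; case: (U i); case: (x i).
Qed.

Lemma parity_indicatorC U : parity U (indicator (predC U)) = false.
Proof. by rewrite parityE big1 // => i Ui; rewrite ffunE /= Ui. Qed.

Lemma wt_indicator A V : wt A (indicator V) = count (fun i => A i && V i) (iota 0 n).
Proof.
rewrite /wt -sum1_count.
have -> : iota 0 n = index_iota 0 n by rewrite /index_iota subn0.
rewrite big_mkord.
rewrite big_mkcond [RHS]big_mkcond; apply: eq_bigr => i _.
by rewrite ffunE; case: (A i); case: (V i).
Qed.

Lemma cubic_term_bvclr (a b m : nat) (xa xb ym : bool) :
  ym * ((a < b) * ((xa && (a != m)) * (xb && (b != m)))) =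
  (a < b < m) * (xa * xb * ym) + (a < m < b) * (xa * ym * xb) + (m < a < b) * (ym * xa * xb).
Proof.
case: xa; case: xb; case: ym; rewrite /= ?muln0 ?mul0n ?muln1 ?mul1n ?addn0 //.
case: (ltngtP a b); case: (ltngtP a m); case: (ltngtP b m) => //=; lia.
Qed.

Lemma sum3D (F G H : 'I_n -> 'I_n -> 'I_n -> nat) :
  \sum_(i < n) \sum_(j < n) \sum_(k < n) (F i j k + G i j k + H i j k) =
  \sum_(i < n) \sum_(j < n) \sum_(k < n) F i j k +
  \sum_(i < n) \sum_(j < n) \sum_(k < n) G i j k +
  \sum_(i < n) \sum_(j < n) \sum_(k < n) H i j k.
Proof.
rewrite -!big_split; apply: eq_bigr => i _; rewrite -!big_split; apply: eq_bigr => j _.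
by rewrite -!big_split.
Qed.

Lemma sum3_rot (F : 'I_n -> 'I_n -> 'I_n -> nat) :
  \sum_(i < n) \sum_(j < n) \sum_(k < n) F i j k =
  \sum_(k < n) \sum_(i < n) \sum_(j < n) F i j k.
Proof.
transitivity (\sum_(i < n) \sum_(k < n) \sum_(j < n) F i j k).
  by apply: eq_bigr => i _; exact: exchange_big.
exact: exchange_big.
Qed.

Definition bvclr x (m : 'I_n) : bv n := [ffun a : 'I_n => x a && (a != m)].

Lemma cubic_sum_bvclr x y :
  \sum_(i < n) \sum_(j < n) \sum_(k < n)
     ((i < j < k) * (x i * x j * y k + x i * y j * x k + y i * x j * x k)) =
  \sum_(m < n) (y m * 'C(wt predT (bvclr x m), 2)).
Proof.
symmetry.
under eq_bigr => m _ do rewrite -sum_lt_pairs big_distrr /=.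
under eq_bigr => m _ do under eq_bigr => a _ do rewrite big_distrr /=.
under eq_bigr => m _ do under eq_bigr => a _ do under eq_bigr => b _ do
  rewrite !ffunE cubic_term_bvclr.
rewrite sum3D; symmetry.
under eq_bigr => i _ do under eq_bigr => j _ do under eq_bigr => k _ do
  rewrite !mulnDr.
rewrite sum3D sum3_rot [X in _ + X + _]exchange_big.
reflexivity.
Qed.

Lemma wt_bvclr x m : wt predT (bvclr x m) + x m = wt predT x.
Proof.
rewrite !wt_predT (bigD1 m) //= [in RHS](bigD1 m) //= ffunE eqxx andbF add0n addnC.
by congr (_ + _); apply: eq_bigr => i Hi; rewrite ffunE Hi andbT.
Qed.

Lemma odd_cubic_term x y m :
  odd (y m * 'C(wt predT (bvclr x m), 2)) = y m && (parity2 predT x (+) (x m && ~~ parity predT x)).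
Proof.
have H := wt_bvclr x m.
rewrite oddM; case: (y m) => //=; rewrite /parity2 /parity -H.
case: (x m) => /=; last by rewrite addn0 addbF.
by rewrite bin2D /= addn0 muln1 oddD addn1 /= negbK -addbA addbb addbF.
Qed.

Lemma odd_cubic x y :
  odd (\sum_(i < n) \sum_(j < n) \sum_(k < n)
     ((i < j < k) * (x i * x j * y k + x i * y j * x k + y i * x j * x k))) =
  (parity predT y && parity2 predT x) (+) (~~ parity predT x && dotb predT x y).
Proof.
rewrite cubic_sum_bvclr odd_sum.
under eq_bigr => m _ do rewrite odd_cubic_term andb_addr.
rewrite big_split /= !parityE /dotb /predT /= big_distrl /=; congr (_ (+) _).
rewrite big_distrr /=; apply: eq_bigr => i _.
by case: (x i); case: (y i); case: (~~ _).
Qed.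

End Twist.

Lemma ftw_twist n p (x y : bv n) : ftw p x y = twist (fun i => i < p) x y.
Proof.
rewrite /ftw /twist !oddD odd_cubic -uppbE; congr (_ (+) _).
rewrite odd_sum /dotb [RHS]big_mkcond /=; apply: eq_bigr => i _.
by case: (i < p); case: (x i); case: (y i).
Qed.

Section TwistEquiv.
Variable n : nat.
Implicit Types (x y : bv n) (P U : pred nat).

Definition twist_equiv P P' := exists (psi : bv n -> bv n) (s : bv n -> bool),
  (forall x y, psi (bvadd x y) = bvadd (psi x) (psi y)) /\ bijective psi /\
  (forall x y, twist P' (psi x) (psi y) = twist P x y (+) s x (+) s y (+) s (bvadd x y)).

Lemma twist_equiv_trans P1 P2 P3 :
  twist_equiv P1 P2 -> twist_equiv P2 P3 -> twist_equiv P1 P3.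
Proof.
move=> [f [s [fA [fB fS]]]] [g [t [gA [gB gS]]]].
exists (g \o f), (fun x => s x (+) t (f x)); split; [|split].
- by move=> x y /=; rewrite fA gA.
- exact: bij_comp.
- by move=> x y /=; rewrite gS fS fA !addb_xorb; btauto.
Qed.

Lemma twist_equiv_eq_in P Q Q' :
  (forall i, i < n -> Q i = Q' i) -> twist_equiv P Q -> twist_equiv P Q'.
Proof.
move=> hQ [psi [s [psiA [psiB hS]]]]; exists psi, s; do 2!split => //.
by move=> x y; rewrite -hS /twist; congr (_ (+) _); apply: eq_bigl => i; rewrite hQ.
Qed.

Lemma uppbC u y :
  uppb u y = uppb y u (+) (parity predT y && parity predT u) (+) dotb predT y u.
Proof. by rewrite -addbA -uppb_sym addbA addbb addFb. Qed.

Lemma twist_equiv_flip P U :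
  parity predT (indicator n (predC U)) = false ->
  parity2 predT (indicator n (predC U)) = true ->
  parity (fun i => P i (+) U i) (indicator n (predC U)) = true ->
  twist_equiv P (fun i => P i (+) U i).
Proof.
set u := indicator n (predC U) => he hc hk.
have hUu : parity U u = false by exact: parity_indicatorC.
pose psi x := if parity U x then bvadd x u else x.
pose s x := parity2 U x (+) (parity U x && (uppb x u (+) dotb (fun i => P i (+) U i) x u)).
have psiA : forall x y, psi (bvadd x y) = bvadd (psi x) (psi y).
  move=> x y; rewrite /psi parityD.
  by case: (parity U x); case: (parity U y) => //=;
    apply/ffunP => i; rewrite !ffunE !addb_xorb; btauto.
have psiK : cancel psi psi.
  move=> x; rewrite /psi; case Hx: (parity U x); last by rewrite Hx.
  by rewrite parityD Hx hUu; apply/ffunP => i; rewrite !ffunE addbK.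
exists psi, s; split; first exact: psiA.
split; first by exists psi.
move=> x y; rewrite /psi /s; case Hx: (parity U x); case Hy: (parity U y).
all: rewrite /twist ?parityD ?parity2D ?dotbDl ?dotbDr ?uppbDl ?uppbDr.
all: rewrite ?(uppbxx u) ?dotbxx ?(dotbC _ u y) ?(dotbC _ u x) ?(uppbC u y) ?(uppbC u x).
all: rewrite ?dotb_indicatorC ?he ?hc ?hk ?dotb_predD ?Hx ?Hy ?hUu.
all: rewrite !addb_xorb; btauto.
Qed.

End TwistEquiv.

Section GradedIso.
Local Open Scope ring_scope.
Import GRing.Theory.

Lemma graded_iso_of_twist_equiv n p p' :
  twist_equiv n (fun i => i < p)%N (fun i => i < p')%N -> graded_iso n p p'.
Proof.
move=> [psi [s [psiA [[psii psiK psiiK] hS]]]].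
have hF x y : ftw p' (psi x) (psi y) = ftw p x y (+) s x (+) s y (+) s (bvadd x y).
  by rewrite !ftw_twist hS.
pose sg (b : bool) : R := (-1) ^+ b.
pose phi (a : Oalg n) : Oalg n := [ffun z => sg (s (psii z)) * a (psii z)].
pose phii (a : Oalg n) : Oalg n := [ffun z => sg (s z) * a (psi z)].
exists phi, psi; split; [|split; [|split; [|split; [|split; [|split]]]]].
- by move=> a b; apply/ffunP => z; rewrite !ffunE mulrDr.
- by move=> c a; apply/ffunP => z; rewrite !ffunE mulrCA.
- exists phii => a; apply/ffunP => z; rewrite !ffunE ?psiK ?psiiK; exact: signrMK.
- move=> a b; apply/ffunP => z; rewrite !ffunE mulr_sumr.
  rewrite [RHS](reindex_inj (can_inj psiK)) /=; apply: eq_bigr => x _.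
  have Ez : bvadd (psi x) z = psi (bvadd x (psii z)) by rewrite psiA psiiK.
  rewrite !ffunE Ez !psiK hF.
  have -> : bvadd x (bvadd x (psii z)) = psii z.
    by apply/ffunP => i; rewrite !ffunE addKb.
  rewrite /sg !signr_addb.
  by case: (s x); case: (s (bvadd x (psii z))); case: (s (psii z));
    rewrite /= ?expr0 ?expr1; ring.
- exact: (Bijective psiK psiiK).
- exact: psiA.
- move=> x; exists (sg (s x)); apply/ffunP => z; rewrite !ffunE.
  case: eqP => [<-|ne]; first by rewrite psiiK eqxx mulr1.
  case: eqP => [e|]; last by rewrite !mulr0.
  by case: ne; rewrite e psiK.
Qed.

End GradedIso.

Lemma count_split (Q : pred nat) (L : seq nat) n :
  uniq L -> all (fun i => i < n) L ->
  count (fun i => Q i && (i \notin L)) (iota 0 n) + count Q L = count Q (iota 0 n).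
Proof.
move=> uL aL.
have pe : perm_eq (filter (fun i => i \in L) (iota 0 n)) L.
  apply: uniq_perm; [by rewrite filter_uniq // iota_uniq | exact: uL |].
  move=> i; rewrite mem_filter mem_iota add0n /=.
  by case iL: (i \in L) => //=; move/allP: aL => /(_ i iL) ->.
rewrite -(permP pe) count_filter -count_predUI.
have -> : count (predI (fun i => Q i && (i \notin L)) (predI Q (fun i => i \in L))) (iota 0 n) = 0.
  apply/eqP; rewrite -leqn0 leqNgt -has_count; apply/hasPn => i _ /=.
  by case: (i \in L); rewrite ?andbF.
by rewrite addn0; apply: eq_count => i /=; case: (Q i); case: (i \in L).
Qed.

Lemma count_mem_iota (L : seq nat) n :
  uniq L -> all (fun i => i < n) L -> count (fun i => i \in L) (iota 0 n) = size L.
Proof.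
move=> uL aL; have := count_split (fun i => i \in L) uL aL.
rewrite (eq_count (a2 := pred0)); last by move=> i /=; case: (i \in L).
rewrite count_pred0 add0n => <-.
by rewrite (eq_in_count (a2 := predT)) ?count_predT.
Qed.

Lemma count_lt_iota p n : p <= n -> count (fun i => i < p) (iota 0 n) = p.
Proof.
move=> le; rewrite -(subnKC le) iotaD count_cat add0n.
rewrite (eq_in_count (a2 := predT)); last by move=> i; rewrite mem_iota => /andP [_].
rewrite count_predT size_iota (eq_in_count (a2 := pred0)) ?count_pred0 ?addn0 //.
by move=> i; rewrite mem_iota => /andP [h _] /=; rewrite ltnNge h.
Qed.

Lemma odd_count_addb (a b : pred nat) s :
  odd (count (fun i => a i (+) b i) s) = odd (count a s) (+) odd (count b s).
Proof. by elim: s => //= i s IH; rewrite !oddD IH !oddb !addb_xorb; btauto. Qed.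

Lemma odd_bin2_4n2 j : odd 'C(4 * j + 2, 2).
Proof.
have -> : 4 * j + 2 = (2 * j + 1) + (2 * j + 1) by lia.
by rewrite bin2D !oddD addbb /= oddM andbb oddD oddM.
Qed.

Lemma twist_equiv_flip_seq n j (P Q : pred nat) (L : seq nat) :
  uniq L -> all (fun i => i < n) L -> n = size L + (4 * j + 2) ->
  odd (count P (iota 0 n)) (+) odd (count P L) ->
  (forall i, i < n -> P i (+) (i \in L) = Q i) ->
  twist_equiv n P Q.
Proof.
move=> uL aL nL hP hQ; apply: twist_equiv_eq_in hQ _.
have cs := count_split _ uL aL.
have wt_u : count (fun i => predT i && predC (fun i => i \in L) i) (iota 0 n) = 4 * j + 2.
  have := cs predT; rewrite !count_predT size_iota nL.
  by rewrite (eq_count (a2 := fun i => true && (i \notin L))) //; lia.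
apply: twist_equiv_flip.
- by rewrite /parity wt_indicator wt_u oddD oddM.
- by rewrite /parity2 wt_indicator wt_u odd_bin2_4n2.
- rewrite /parity wt_indicator.
  rewrite (eq_count (a2 := fun i => P i && (i \notin L))); last first.
    by move=> i /=; case: (P i); case: (i \in L).
  have E := cs P.
  have -> : count (fun i => P i && (i \notin L)) (iota 0 n) = count P (iota 0 n) - count P L.
    by rewrite -E addnK.
  by rewrite oddB // -E leq_addl.
Qed.

Lemma twist_equiv_add4 j p : odd p -> p + 4 <= 4 * j + 6 ->
  twist_equiv (4 * j + 6) (fun i => i < p) (fun i => i < p + 4).
Proof.
move=> op le.
apply: (twist_equiv_flip_seq (j := j) (L := [:: p; p + 1; p + 2; p + 3])).
- by rewrite /= !inE; lia.
- by rewrite /=; lia.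
- by rewrite /=; lia.
- rewrite count_lt_iota; last lia.
  by rewrite /= ltnn !ltnNge !leq_addr op.
- by move=> i _; rewrite !inE; lia.
Qed.

Lemma twist_equiv_sub2 j r : ~~ odd r -> r + 6 <= 4 * j + 6 ->
  twist_equiv (4 * j + 6) (fun i => i < r + 4) (fun i => i < r + 2).
Proof.
move=> er le; set n := 4 * j + 6.
set L1 := map (addn r) [:: 0; 1; 2; 4].
set L2 := map (addn r) [:: 0; 2; 3; 5].
set L3 := map (addn r) [:: 1; 2; 4; 5].
set P1 := fun i => (i < r + 4) (+) (i \in L1).
set P2 := fun i => P1 i (+) (i \in L2).
have [u1 u2 u3] : [/\ uniq L1, uniq L2 & uniq L3].
  by split; rewrite map_inj_uniq //; exact: addnI.
have a1 : all (fun i => i < n) L1 by rewrite /L1 /n /=; lia.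
have a2 : all (fun i => i < n) L2 by rewrite /L2 /n /=; lia.
have a3 : all (fun i => i < n) L3 by rewrite /L3 /n /=; lia.
have nL : n = 4 + (4 * j + 2) by rewrite /n; lia.
have c0 : odd (count (fun i => i < r + 4) (iota 0 n)) = false.
  by rewrite count_lt_iota ?oddD ?(negbTE er) // /n; lia.
have c1 : odd (count (fun i => i \in L1) (iota 0 n)) = false by rewrite count_mem_iota.
have c2 : odd (count (fun i => i \in L2) (iota 0 n)) = false by rewrite count_mem_iota.
apply: (twist_equiv_trans (twist_equiv_flip_seq (Q := P1) u1 a1 nL _ _)) => //.
  by rewrite c0 /L1 /=; lia.
apply: (twist_equiv_trans (twist_equiv_flip_seq (Q := P2) u2 a2 nL _ _)) => //.
  by rewrite /P1 odd_count_addb c0 c1 /L1 /L2 /= !inE; lia.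
apply: (twist_equiv_flip_seq u3 a3 nL).
  by rewrite /P2 /P1 !odd_count_addb c0 c1 c2 /L1 /L2 /L3 /= !inE; lia.
move=> i _; rewrite /P2 /P1 /L1 /L2 /L3.
have [lt | /subnKC <-] := ltnP i r.
  have notin s : i \in map (addn r) s = false.
    by apply/negbTE/mapP => -[e _ eq_ie]; move: lt; rewrite eq_ie ltnNge leq_addr.
  by rewrite !notin !(ltn_addr _ lt).
by rewrite !(mem_map (@addnI r)) !ltn_add2l; case: (i - r) => [|[|[|[|[|[|d]]]]]].
Qed.

Theorem mainTheorem8 (k p q : nat) :
  (p + q = 4 * k + 2)%N -> (1 <= k)%N ->
  ((odd p /\ odd q /\ (1 <= p)%N /\ (5 <= q)%N -> graded_iso (p + q) p (p + 4))
   /\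
   (~~ odd p /\ ~~ odd q /\ (4 <= p)%N /\ (2 <= q)%N -> graded_iso (p + q) p (p - 2))).
Proof.
move=> hn hk; have [j nE] : exists j, p + q = 4 * j + 6 by exists k.-1; lia.
rewrite nE; split.
- move=> [op [_ [_ q5]]].
  by apply/graded_iso_of_twist_equiv/twist_equiv_add4 => //; lia.
- move=> [ep [_ [p4 q2]]].
  have [r pE] : exists r, p = r + 4 by exists (p - 4); lia.
  have er : ~~ odd r by move: ep; rewrite pE oddD /= addbF.
  rewrite pE (_ : r + 4 - 2 = r + 2); last lia.
  by apply/graded_iso_of_twist_equiv/twist_equiv_sub2 => //; lia.
Qed.
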